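(* Let $p_X=\sum_{j=1}^{N_r}m_j\delta_{x_j}$ with $m_j\ge 0$, $\sum_j m_j=1$, and $x_j$ the standard points. (a) If $r\notin\mathbb{N}$ (so $N_r=2n+2$), set $m_0:=0$ and $m_{2n+3}:=0$, and assume $m_{j-1}+m_j>0$ for all $j=1,\dots,2n+3$. Then for each $j=1,\dots,2n+1$, the map $x\mapsto i(x;p_X)$ is affine on $[x_j,x_{j+1}]$ with slope $$r\log\frac{m_{j-1}+m_j}{m_{j+1}+m_{j+2}}.$$ (b) If $r\in\mathbb{N}$ (so $N_r=n+1$) and all $m_j>0$, then for each $j=1,\dots,n$ the map $x\mapsto i(x;p_X)$ is affine on $[x_j,x_{j+1}]$ with slope $r\log(m_j/m_{j+1})$.
   Context: Fix $b>0$ and set $r:=1/(2b)$, $n:=\lfloor r\rfloor$. Consider the additive uniform noise channel $Y=X+N$ with $N\sim\mathrm{Uniform}(-b,b)$ independent of $X$, so the transition density is $p_N(y\mid x)=r\,\mathbf{1}_{x-b<y<x+b}$. For a probability distribution $p_X$ on $[0,1]$ the output density is $p_Y(y;p_X)=\int p_N(y\mid x)\,dp_X(x)$ and the marginal information density is $i(x;p_X)=\int p_N(y\mid x)\log\frac{p_N(y\mid x)}{p_Y(y;p_X)}\,dy$. Standard points: let $N_r=n+1$ if $r\in\mathbb{N}$ and $N_r=2n+2$ if $r\notin\mathbb{N}$. For $j=1,\dots,N_r$ set $x_j=(j-1)/n$ if $r\in\mathbb{N}$; if $r\notin\mathbb{N}$, set $x_j=(j-1)/(2r)$ for odd $j$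 and $x_j=1-(2n+2-j)/(2r)$ for even $j$ (these satisfy $0=x_1<x_2<\dots<x_{N_r}=1$). *)

From Stdlib Require Import Reals List.
From Coquelicot Require Import Coquelicot.
Open Scope R_scope.

Definition rr (b : R) : R := / (2 * b).

Definition nn (b : R) : nat := Z.to_nat (Int_part (rr b)).

Definition is_natR (x : R) : Prop := exists k : nat, x = INR k.

Definition sum1N (N : nat) (f : nat -> R) : R :=
  fold_right (fun j acc => f j + acc) 0 (List.seq 1 N).

Definition pN (b y x : R) : R :=
  if Rlt_dec (x - b) y then (if Rlt_dec y (x + b) then rr b else 0) else 0.

(* output density for the discrete input p_X = sum_{j=1}^N m_j delta_{xs j} *)
Definition pY (b : R) (N : nat) (xs m : nat -> R) (y : R) : R :=
  sum1N N (fun j => m j * pN b y (xs j)).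

(* marginal information density
   i(x; p_X) = int p_N(y|x) log (p_N(y|x) / p_Y(y)) dy ;
   the integrand vanishes outside (x-b, x+b), so we integrate over that interval. *)
Definition info (b : R) (N : nat) (xs m : nat -> R) (x : R) : R :=
  RInt (fun y => pN b y x * ln (pN b y x / pY b N xs m y)) (x - b) (x + b).

Definition xs_nat (b : R) (j : nat) : R := (INR j - 1) / INR (nn b).

Definition xs_nonnat (b : R) (j : nat) : R :=
  if Nat.odd j then (INR j - 1) / (2 * rr b)
  else 1 - (2 * INR (nn b) + 2 - INR j) / (2 * rr b).

(* m extended by zero outside 1..N (so m_0 = 0, m_{N+1} = 0) *)
Definition mext (N : nat) (m : nat -> R) (j : nat) : R :=
  if andb (Nat.leb 1 j) (Nat.leb j N) then m j else 0.

Definition affine_on (f : R -> R) (a c s : R) : Prop :=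
  exists c0 : R, forall x, a <= x <= c -> f x = c0 + s * x.

(** The kernel [p_N(.|x)] is the constant [r] on [(x-b, x+b)], so
    [i(x) = int_{x-b}^{x+b} r ln (r / p_Y(y)) dy].  Consecutive standard points
    [u < v] satisfy [v - u <= 2b], and for [x] in [[u, v]] the window
    [(x-b, x+b)] crosses only the three cells [(u-b, v-b)], [(v-b, u+b)],
    [(u+b, v+b)], on each of which [p_Y] is [r] times the mass of the (at most
    two) standard points within distance [b].  Moving [x] trades length of the
    first cell for length of the last one, so [i] is affine with slope
    [r ln M1 - r ln M2], where [M1] and [M2] are the masses seen on those cells. *)
From Stdlib Require Import Reals List Lra Lia Psatz ZArith.
From Coquelicot Require Import Coquelicot.
Open Scope R_scope.

Lemma pN_inside b y x : x - b < y < x + b -> pN b y x = rr b.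
Proof.
  intros [H1 H2]. unfold pN.
  destruct (Rlt_dec (x - b) y); [|lra].
  destruct (Rlt_dec y (x + b)); [reflexivity|lra].
Qed.

Lemma pN_outside b y x : y <= x - b \/ x + b <= y -> pN b y x = 0.
Proof.
  intros H. unfold pN.
  destruct (Rlt_dec (x - b) y); [|reflexivity].
  destruct (Rlt_dec y (x + b)); [lra|reflexivity].
Qed.

Lemma rr_gt0 b : 0 < b -> 0 < rr b.
Proof. intros Hb. unfold rr. apply Rinv_0_lt_compat. lra. Qed.

Definition kron (i c : nat) : R := if Nat.eqb i c then 1 else 0.

Lemma sum1N_ext N f g : (forall j, (1 <= j <= N)%nat -> f j = g j) ->
  sum1N N f = sum1N N g.
Proof.
  intros H. unfold sum1N.
  assert (Hin : forall j, In j (seq 1 N) -> f j = g j)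
    by (intros j Hj; apply in_seq in Hj; apply H; lia).
  induction (seq 1 N) as [|a l IH]; simpl; [reflexivity|].
  rewrite (Hin a (or_introl eq_refl)), IH; [reflexivity|].
  intros j Hj. apply Hin. now right.
Qed.

Lemma sum1N_linear N (f g : nat -> R) (k : R) :
  sum1N N (fun j => k * (f j + g j)) = k * (sum1N N f + sum1N N g).
Proof.
  unfold sum1N. generalize 1%nat as s.
  induction N as [|N IH]; intros s; simpl; [ring|]. rewrite IH. ring.
Qed.

Lemma fold_seq_kron (m : nat -> R) c k s :
  fold_right (fun j acc => m j * kron j c + acc) 0 (seq s k) =
  if andb (Nat.leb s c) (Nat.ltb c (s + k)) then m c else 0.
Proof.
  revert s. induction k as [|k IH]; intros s; cbn [seq fold_right].
  - destruct (Nat.leb_spec s c); destruct (Nat.ltb_spec c (s + 0)); simpl; lia || reflexivity.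
  - rewrite IH. unfold kron. destruct (Nat.eqb_spec s c) as [->|Hsc].
    + destruct (Nat.leb_spec (S c) c); [lia|].
      destruct (Nat.leb_spec c c); [|lia].
      destruct (Nat.ltb_spec c (c + S k)); [|lia]. simpl. ring.
    + destruct (Nat.leb_spec (S s) c); destruct (Nat.ltb_spec c (S s + k));
      destruct (Nat.leb_spec s c); destruct (Nat.ltb_spec c (s + S k)); simpl; lia || ring.
Qed.

Lemma sum1N_kron N m c : sum1N N (fun j => m j * kron j c) = mext N m c.
Proof.
  unfold sum1N, mext. rewrite fold_seq_kron.
  destruct (Nat.leb_spec 1 c); destruct (Nat.ltb_spec c (1 + N)); destruct (Nat.leb_spec c N);
    simpl; lia || reflexivity.
Qed.

(** Indices outside [1..N] are allowed for [c1], [c2]: they contribute [0]. *)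
Lemma pY_two_hits b N xs m y c1 c2 :
  (forall i, (1 <= i <= N)%nat -> pN b y (xs i) = rr b * (kron i c1 + kron i c2)) ->
  pY b N xs m y = rr b * (mext N m c1 + mext N m c2).
Proof.
  intros H. unfold pY.
  rewrite (sum1N_ext N _ (fun j => rr b * (m j * kron j c1 + m j * kron j c2))).
  - now rewrite sum1N_linear, !sum1N_kron.
  - intros j Hj. rewrite H by exact Hj. ring.
Qed.

Lemma is_RInt_const_on (G : R -> R) a c k :
  a <= c -> (forall y, a < y < c -> G y = k) -> is_RInt G a c ((c - a) * k).
Proof.
  intros Hac HG. apply (is_RInt_ext (fun _ => k)).
  - intros y Hy. rewrite Rmin_left, Rmax_right in Hy by lra. symmetry. now apply HG.
  - exact (@is_RInt_const R_NormedModule a c k).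
Qed.

Lemma RInt_window_three_cells (G : R -> R) (b u v k1 k0 k2 : R) :
  u <= v <= u + 2 * b ->
  (forall y, u - b < y < v - b -> G y = k1) ->
  (forall y, v - b < y < u + b -> G y = k0) ->
  (forall y, u + b < y < v + b -> G y = k2) ->
  forall x, u <= x <= v ->
  RInt G (x - b) (x + b) = (v - x) * k1 + (u + 2 * b - v) * k0 + (x - u) * k2.
Proof.
  intros Huv H1 H0 H2 x Hx. apply is_RInt_unique.
  assert (I1 := is_RInt_const_on G (x - b) (v - b) k1 ltac:(lra) ltac:(intros; apply H1; lra)).
  assert (I0 := is_RInt_const_on G (v - b) (u + b) k0 ltac:(lra) ltac:(intros; apply H0; lra)).
  assert (I2 := is_RInt_const_on G (u + b) (x + b) k2 ltac:(lra) ltac:(intros; apply H2; lra)).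
  replace ((v - x) * k1 + (u + 2 * b - v) * k0 + (x - u) * k2)
    with (((v - b) - (x - b)) * k1 + ((u + b) - (v - b)) * k0 + ((x + b) - (u + b)) * k2)
    by ring.
  exact (is_RInt_Chasles _ _ _ _ _ _ (is_RInt_Chasles _ _ _ _ _ _ I1 I0) I2).
Qed.

Lemma info_as_RInt b N xs m x : 0 < b ->
  info b N xs m x = RInt (fun y => rr b * ln (rr b / pY b N xs m y)) (x - b) (x + b).
Proof.
  intros Hb. unfold info. apply RInt_ext. intros y Hy.
  rewrite Rmin_left, Rmax_right in Hy by lra.
  now rewrite pN_inside by lra.
Qed.

(** [M0] is arbitrary when the middle cell is empty ([v = u + 2b]). *)
Lemma info_affine_of_cells b N xs m u v M1 M0 M2 :
  0 < b -> u <= v <= u + 2 * b -> 0 < M1 -> 0 < M2 ->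
  (forall y, u - b < y < v - b -> pY b N xs m y = rr b * M1) ->
  (forall y, v - b < y < u + b -> pY b N xs m y = rr b * M0) ->
  (forall y, u + b < y < v + b -> pY b N xs m y = rr b * M2) ->
  affine_on (info b N xs m) u v (rr b * ln (M1 / M2)).
Proof.
  intros Hb Huv HM1 HM2 H1 H0 H2.
  set (k := fun M => rr b * ln (rr b / (rr b * M))).
  exists (v * k M1 + (u + 2 * b - v) * k M0 - u * k M2). intros x Hx.
  rewrite info_as_RInt by exact Hb.
  rewrite (RInt_window_three_cells _ b u v (k M1) (k M0) (k M2)); try assumption;
    [| intros y Hy; unfold k; now rewrite H1
     | intros y Hy; unfold k; now rewrite H0
     | intros y Hy; unfold k; now rewrite H2].
  assert (Hr := rr_gt0 b Hb).
  assert (Hk : forall M, 0 < M -> k M = - (rr b * ln M)).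
  { intros M HM. unfold k.
    replace (rr b / (rr b * M)) with (/ M) by (field; lra).
    rewrite ln_Rinv by exact HM. ring. }
  rewrite (Hk M1 HM1), (Hk M2 HM2), ln_div by lra. ring.
Qed.

Lemma nn_of_natR b k : rr b = INR k -> nn b = k.
Proof.
  intros H. unfold nn, Int_part. rewrite H.
  rewrite <- (tech_up (INR k) (Z.of_nat k + 1)).
  - rewrite Z.add_simpl_r. apply Nat2Z.id.
  - rewrite plus_IZR, <- INR_IZR_INZ. simpl. lra.
  - rewrite plus_IZR, <- INR_IZR_INZ. simpl. lra.
Qed.

Lemma xs_nat_eq b i : 0 < b -> is_natR (rr b) -> xs_nat b i = (INR i - 1) * (2 * b).
Proof.
  intros Hb [k Hk]. unfold xs_nat. rewrite (nn_of_natR b k Hk), <- Hk.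
  unfold rr. field. lra.
Qed.

Lemma pY_nat_near b m c y : 0 < b -> is_natR (rr b) -> (1 <= c <= nn b + 1)%nat ->
  xs_nat b c - b < y < xs_nat b c + b ->
  pY b (nn b + 1) (xs_nat b) m y = rr b * m c.
Proof.
  intros Hb Hn Hc Hy.
  rewrite (pY_two_hits b (nn b + 1) (xs_nat b) m y c 0).
  - unfold mext. destruct (Nat.leb_spec 1 c); [|lia].
    destruct (Nat.leb_spec c (nn b + 1)); [|lia]. simpl. ring.
  - intros i Hi. unfold kron. destruct (Nat.eqb_spec i 0); [lia|].
    destruct (Nat.eqb_spec i c) as [->|Hic].
    + rewrite pN_inside by lra. ring.
    + rewrite pN_outside; [ring|].
      rewrite !xs_nat_eq in * by assumption.
      assert (G : (i + 1 <= c \/ c + 1 <= i)%nat) by lia.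
      destruct G as [G|G]; apply le_INR in G; rewrite plus_INR in G; simpl in G;
        [right|left]; nra.
Qed.

Lemma info_nat_affine b m j : 0 < b -> is_natR (rr b) ->
  (forall i, (1 <= i <= nn b + 1)%nat -> 0 < m i) -> (1 <= j <= nn b)%nat ->
  affine_on (info b (nn b + 1) (xs_nat b) m) (xs_nat b j) (xs_nat b (j + 1))
    (rr b * ln (m j / m (j + 1)%nat)).
Proof.
  intros Hb Hn Hm Hj.
  assert (Hv : xs_nat b (j + 1) = xs_nat b j + 2 * b).
  { rewrite !xs_nat_eq, plus_INR by assumption. simpl. ring. }
  apply (info_affine_of_cells _ _ _ _ _ _ _ 0); try lra; try (apply Hm; lia).
  - intros y Hy. apply pY_nat_near; auto; [lia | lra].
  - intros y Hy. exfalso. lra.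
  - intros y Hy. apply pY_nat_near; auto; [lia | lra].
Qed.

Lemma nn_bounds b : 0 < b -> ~ is_natR (rr b) -> INR (nn b) < rr b < INR (nn b) + 1.
Proof.
  intros Hb Hn. assert (Hr := rr_gt0 b Hb).
  destruct (base_Int_part (rr b)) as [H1 H2].
  assert (Hz : (0 <= Int_part (rr b))%Z).
  { apply Z.lt_succ_r, lt_IZR. rewrite succ_IZR. lra. }
  assert (E : INR (nn b) = IZR (Int_part (rr b))).
  { unfold nn. now rewrite INR_IZR_INZ, Z2Nat.id. }
  rewrite E. split; [|lra].
  destruct H1 as [H1|H1]; [exact H1|].
  exfalso. apply Hn. exists (nn b). now rewrite E.
Qed.

Lemma odd_succ c : Nat.odd (S c) = negb (Nat.odd c).
Proof. unfold Nat.odd at 1. now rewrite Nat.even_succ. Qed.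

Lemma xs_nonnat_eq b i : 0 < b -> xs_nonnat b i =
  if Nat.odd i then (INR i - 1) * b else 1 - (2 * INR (nn b) + 2 - INR i) * b.
Proof. intros Hb. unfold xs_nonnat, rr. destruct (Nat.odd i); field; lra. Qed.

Lemma xs_nonnat_add2 b i : 0 < b -> xs_nonnat b (i + 2) = xs_nonnat b i + 2 * b.
Proof.
  intros Hb. rewrite !xs_nonnat_eq by exact Hb.
  replace (i + 2)%nat with (S (S i)) by lia.
  change (Nat.odd (S (S i))) with (Nat.odd i).
  rewrite !S_INR. destruct (Nat.odd i); ring.
Qed.

(** Here [n < r < n + 1] is what places the interleaved grids in alternating order. *)
Lemma xs_nonnat_succ_bounds b i : 0 < b -> ~ is_natR (rr b) ->
  xs_nonnat b i <= xs_nonnat b (i + 1) <= xs_nonnat b i + 2 * b.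
Proof.
  intros Hb Hn. destruct (nn_bounds b Hb Hn) as [B1 B2].
  assert (E : rr b * (2 * b) = 1) by (unfold rr; field; lra).
  assert (C1 : 2 * INR (nn b) * b < 1) by nra.
  assert (C2 : 1 < 2 * (INR (nn b) + 1) * b) by nra.
  rewrite !xs_nonnat_eq by exact Hb.
  replace (i + 1)%nat with (S i) by lia. rewrite odd_succ, S_INR.
  destruct (Nat.odd i); simpl; split; nra.
Qed.

Lemma xs_nonnat_same_parity_far b i c : 0 < b -> Nat.odd i = Nat.odd c -> i <> c ->
  xs_nonnat b i + 2 * b <= xs_nonnat b c \/ xs_nonnat b c + 2 * b <= xs_nonnat b i.
Proof.
  intros Hb Hp Hne.
  assert (G : (i + 2 <= c \/ c + 2 <= i)%nat).
  { destruct (Nat.eq_dec c (S i)) as [->|];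
      [rewrite odd_succ in Hp; destruct (Nat.odd i); discriminate|].
    destruct (Nat.eq_dec i (S c)) as [->|];
      [rewrite odd_succ in Hp; destruct (Nat.odd c); discriminate|].
    lia. }
  rewrite !xs_nonnat_eq, Hp by exact Hb.
  destruct G as [G|G]; apply le_INR in G; rewrite plus_INR in G; simpl in G;
    destruct (Nat.odd c); [left|left|right|right]; nra.
Qed.

Lemma pY_nonnat_near_pair b N m c y : 0 < b ->
  xs_nonnat b c - b < y < xs_nonnat b c + b ->
  xs_nonnat b (c + 1) - b < y < xs_nonnat b (c + 1) + b ->
  pY b N (xs_nonnat b) m y = rr b * (mext N m c + mext N m (c + 1)).
Proof.
  intros Hb Hy1 Hy2. apply pY_two_hits. intros i _. unfold kron.
  destruct (Nat.eqb_spec i c) as [Hic|Hic]; destruct (Nat.eqb_spec i (c + 1)) as [Hid|Hid];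
    try lia; try (subst i; rewrite pN_inside by lra; ring).
  rewrite pN_outside; [ring|].
  destruct (Bool.bool_dec (Nat.odd i) (Nat.odd c)) as [Hp|Hp].
  - destruct (xs_nonnat_same_parity_far b i c Hb Hp Hic); lra.
  - assert (Hp' : Nat.odd i = Nat.odd (c + 1)).
    { rewrite Nat.add_1_r, odd_succ.
      destruct (Nat.odd i), (Nat.odd c); simpl in *; congruence. }
    destruct (xs_nonnat_same_parity_far b i (c + 1) Hb Hp' Hid); lra.
Qed.

Lemma info_nonnat_affine b N m k : 0 < b -> ~ is_natR (rr b) ->
  0 < mext N m k + mext N m (k + 1) -> 0 < mext N m (k + 2) + mext N m (k + 3) ->
  affine_on (info b N (xs_nonnat b) m) (xs_nonnat b (k + 1)) (xs_nonnat b (k + 2))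
    (rr b * ln ((mext N m k + mext N m (k + 1))
                / (mext N m (k + 2) + mext N m (k + 3)))).
Proof.
  intros Hb Hn H1 H2.
  assert (E2 : (k + 2 = k + 1 + 1)%nat) by lia.
  assert (E3 : (k + 3 = k + 2 + 1)%nat) by lia.
  assert (S0 := xs_nonnat_succ_bounds b k Hb Hn).
  assert (S1 := xs_nonnat_succ_bounds b (k + 1) Hb Hn).
  assert (A0 := xs_nonnat_add2 b k Hb).
  assert (A1 := xs_nonnat_add2 b (k + 1) Hb).
  rewrite <- E2 in S1. replace (k + 1 + 2)%nat with (k + 3)%nat in A1 by lia.
  apply (info_affine_of_cells _ _ _ _ _ _ _ (mext N m (k + 1) + mext N m (k + 2)));
    try lra.
  - intros y Hy. apply pY_nonnat_near_pair; lra.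
  - intros y Hy. rewrite E2. apply pY_nonnat_near_pair; rewrite <- ?E2; lra.
  - intros y Hy. rewrite E3. apply pY_nonnat_near_pair; rewrite <- ?E3; lra.
Qed.

Theorem mainTheorem5 (b : R) (hb : 0 < b) (m : nat -> R) :
  (* (a) r not a natural number, N_r = 2n+2 *)
  (~ is_natR (rr b) ->
   (forall j, (1 <= j <= 2 * nn b + 2)%nat -> 0 <= m j) ->
   sum1N (2 * nn b + 2) m = 1 ->
   (forall j, (1 <= j <= 2 * nn b + 3)%nat ->
      0 < mext (2 * nn b + 2) m (j - 1)%nat + mext (2 * nn b + 2) m j) ->
   forall j, (1 <= j <= 2 * nn b + 1)%nat ->
     affine_on (info b (2 * nn b + 2) (xs_nonnat b) m)
       (xs_nonnat b j) (xs_nonnat b (j + 1)%nat)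
       (rr b * ln ((mext (2 * nn b + 2) m (j - 1)%nat + mext (2 * nn b + 2) m j)
                   / (mext (2 * nn b + 2) m (j + 1)%nat + mext (2 * nn b + 2) m (j + 2)%nat))))
  /\
  (* (b) r a natural number, N_r = n+1 *)
  (is_natR (rr b) ->
   (forall j, (1 <= j <= nn b + 1)%nat -> 0 < m j) ->
   sum1N (nn b + 1) m = 1 ->
   forall j, (1 <= j <= nn b)%nat ->
     affine_on (info b (nn b + 1) (xs_nat b) m)
       (xs_nat b j) (xs_nat b (j + 1)%nat)
       (rr b * ln (m j / m (j + 1)%nat))).
Proof.
  split.
  - intros Hn _ _ Hpos [|k] Hj; [lia|].
    assert (P1 := Hpos (S k) ltac:(lia)).
    assert (P3 := Hpos (k + 3)%nat ltac:(lia)).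
    replace (S k - 1)%nat with k in * by lia.
    replace (k + 3 - 1)%nat with (k + 2)%nat in P3 by lia.
    replace (S k) with (k + 1)%nat in * by lia.
    replace (k + 1 + 1)%nat with (k + 2)%nat by lia.
    replace (k + 1 + 2)%nat with (k + 3)%nat by lia.
    now apply info_nonnat_affine.
  - intros Hn Hpos _ j Hj. now apply info_nat_affine.
Qed.
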